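(* Let $1<K<n$, $\|\cdot\|_s$ a sign- and permutation-invariant norm on $\mathbb{R}^n$, and $x\in\mathbb{R}^n$. Then $u(x)$ is an optimal solution of $$\min\ \|u\|_s\quad\text{s.t. } u_1\ge\dots\ge u_K\ge0,\ u_{K+1}=\dots=u_n=0,\ u\ge_{wm}|x|.$$
   Context: A norm is sign- and permutation-invariant if it is unchanged under permuting entries and under changing signs of entries. $|x|$ is the componentwise absolute value; $v_{[i]}$ is the $i$-th largest entry of $v$; $a\ge_{wm}b$ means $\sum_{i=1}^j a_{[i]}\ge\sum_{i=1}^j b_{[i]}$ for all $j=1,\dots,n$. $s(x)_i=\frac{\sum_{j=i}^n|x|_{[j]}}{K-i+1}$ ($i=1,\dots,K$); $i_x$ is the smallest index in $\{1,\dots,K\}$ minimizing $s(x)_i$; $\delta(x)=s(x)_{i_x}$; $u(x)_i=|x|_{[i]}$ for $i<i_x$, $u(x)_i=\delta(x)$ for $i_x\le i\le K$, $u(x)_i=0$ for $i>K$. *)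

From HB Require Import structures.
From mathcomp Require Import all_boot all_order all_algebra all_fingroup.
Set Implicit Arguments. Unset Strict Implicit. Unset Printing Implicit Defensive.
Import Order.TTheory GRing.Theory Num.Theory.
Local Open Scope ring_scope.

Section Defs.
Variables (R : realFieldType) (n : nat).

Definition is_norm (N : 'rV[R]_n -> R) : Prop :=
  [/\ forall v, N v = 0 -> v = 0,
      forall (a : R) v, N (a *: v) = `|a| * N v
    & forall u v, N (u + v) <= N u + N v].

Definition sign_invariant (N : 'rV[R]_n -> R) : Prop :=
  forall (s : 'I_n -> R) (v : 'rV[R]_n),
    (forall i, s i = 1 \/ s i = -1) ->
    N (\row_i (s i * v ord0 i)) = N v.

Definition perm_invariant (N : 'rV[R]_n -> R) : Prop :=
  forall (p : 'S_n) (v : 'rV[R]_n), N (\row_i v ord0 (p i)) = N v.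

Definition vabs (x : 'rV[R]_n) : 'rV[R]_n := \row_i `|x ord0 i|.

Definition dsort (v : 'rV[R]_n) : seq R :=
  sort (fun a b => b <= a) [seq v ord0 i | i <- enum 'I_n].

(* vbig v i = v_[i+1], the (i+1)-th largest entry (0-based index i) *)
Definition vbig (v : 'rV[R]_n) (i : nat) : R := nth 0 (dsort v) i.

Definition wmaj (a b : 'rV[R]_n) : Prop :=
  forall j : nat, (1 <= j <= n)%N ->
    \sum_(i < j) vbig b i <= \sum_(i < j) vbig a i.

Variable K : nat.

(* s(x)_{i+1} = (sum_{j=i+1}^n |x|_[j]) / (K - i), for 0-based i < K *)
Definition sx (x : 'rV[R]_n) (i : nat) : R :=
  (\sum_(i <= j < n) vbig (vabs x) j) / (K - i)%:R.

(* i_x - 1 (0-based): smallest index in 0..K-1 minimizing s(x) *)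
Definition ix (x : 'rV[R]_n) : nat :=
  find (fun i => all (fun j => sx x i <= sx x j) (iota 0 K)) (iota 0 K).

Definition delta (x : 'rV[R]_n) : R := sx x (ix x).

Definition ux (x : 'rV[R]_n) : 'rV[R]_n :=
  \row_i (if (i < ix x)%N then vbig (vabs x) i
          else if (i < K)%N then delta x else 0).

Definition feasible (x u : 'rV[R]_n) : Prop :=
  [/\ forall i j : 'I_n, (i <= j)%N -> (j < K)%N -> u ord0 j <= u ord0 i,
      forall i : 'I_n, (i < K)%N -> 0 <= u ord0 i,
      forall i : 'I_n, (K <= i)%N -> u ord0 i = 0
    & wmaj u (vabs x)].

End Defs.

From HB Require Import structures.
From mathcomp Require Import all_boot all_order all_algebra all_fingroup.
From mathcomp Require Import ring lra zify.
Set Implicit Arguments. Unset Strict Implicit. Unset Printing Implicit Defensive.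
Import Order.TTheory GRing.Theory Num.Theory.
Local Open Scope ring_scope.

(* A norm that is invariant under signs and permutations does not increase
   under two elementary moves on a row: lowering one entry towards 0, and a
   Robin Hood transfer of mass d <= b_j - b_k from an entry b_j to a smaller
   entry b_k.  Each move is a convex combination of the row with a sign-flipped
   or transposed copy of it.  This gives Fan's dominance: if a >= 0 and b are
   nonincreasing and every prefix sum of a is at most that of b, finitely many
   such moves turn b into a, so N a <= N b.

   The vector u(x) is feasible, and its prefix sums lie below those of every
   feasible u: they coincide with those of |x| up to i_x, equal the total mass
   of |x| from K on, and are affine in between, where the concavity of the
   prefix sums of a nonincreasing u keeps them above that chord. *)

Section PrefixDominance.
Variables (R : realFieldType) (n : nat).
Implicit Types (a b f : nat -> R).

Definition row_of f : 'rV[R]_n := \row_(i < n) f i.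

Definition nonincr f := forall i, (i.+1 < n)%N -> f i.+1 <= f i.

Definition nonneg f := forall i, (i < n)%N -> 0 <= f i.

Definition prefix_le a b :=
  forall m, (m <= n)%N -> \sum_(0 <= i < m) a i <= \sum_(0 <= i < m) b i.

Definition ndiff a b := #|[pred i : 'I_n | a i != b i]|.

Definition transfer b j k d i := if i == j then b j - d else if i == k then b k + d else b i.

Lemma nonincr_le f i j : nonincr f -> (i <= j)%N -> (j < n)%N -> f j <= f i.
Proof.
move=> fS ij jn.
have D_convex : {in [pred l | (l < n)%N] &, forall p q l, (p < l < q)%N -> (l < n)%N}.
  by move=> p q _ qn l /andP[_ /ltn_trans]; apply.
have := homo_leq_in (r := fun u v : R => v <= u) (@lexx _ _) ge_trans D_convex.
apply=> //; [by move=> l _; apply: fS | exact: leq_ltn_trans ij jn].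
Qed.

Lemma sum_transfer b j k d m : j != k ->
  \sum_(0 <= i < m) transfer b j k d i =
  \sum_(0 <= i < m) b i - (if (j < m)%N then d else 0) + (if (k < m)%N then d else 0).
Proof.
move=> jk; elim: m => [|m IH]; first by rewrite !big_geq // !ltn0 subr0 addr0.
rewrite !big_nat_recr //= IH /transfer !ltnS.
have [->|mj] := eqVneq m j.
  by rewrite ltnn leqnn [(k <= j)%N]leq_eqVlt eq_sym (negPf jk); case: ifP => _; lra.
rewrite [(j <= m)%N]leq_eqVlt [j == m]eq_sym (negPf mj) /=.
have [->|mk] := eqVneq m k; first by rewrite leqnn ltnn; case: ifP => _; lra.
by rewrite [(k <= m)%N]leq_eqVlt [k == m]eq_sym !(negPf mk) /=; do 2 case: ifP => _; lra.
Qed.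

Lemma nonincr_transfer a b j k d :
  nonincr a -> nonincr b -> (j < k)%N -> 0 <= d ->
  a j <= b j - d -> ((k < n)%N -> b k + d <= a k) ->
  (forall i, (j < i < k)%N -> a i = b i) -> nonincr (transfer b j k d).
Proof.
move=> sa sb jk d0 hj hk gap i hi; rewrite /transfer.
have kn : i.+1 = k -> (k < n)%N by move <-.
have [ij|ji|eij] := ltngtP i j.
- rewrite (ltn_eqF (ltn_trans ij jk)) (ltn_eqF (leq_ltn_trans ij jk)).
  by have := sb i hi; case: eqP => [<-|_]; lra.
- rewrite (gtn_eqF (ltn_trans ji (ltnSn i))).
  have [ik|ki|eik] := ltngtP i k.
  + rewrite -(gap i) ?ji //; case: eqP => [ek|nek].
      by have := sa i hi; have := hk (kn ek); rewrite ek; lra.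
    have ik1 : (i.+1 < k)%N by rewrite ltn_neqAle ik andbT; apply/eqP.
    by have := sa i hi; rewrite gap // ik1 andbT ltnS ltnW.
  + by rewrite (gtn_eqF (ltn_trans ki (ltnSn i))) sb.
  + by subst k; rewrite (gtn_eqF (ltnSn i)); have := sb i hi; lra.
- subst j; rewrite (gtn_eqF (ltnSn i)); have := sa i hi.
  case: eqP => [ek|nek]; first by have := hk (kn ek); rewrite ek; lra.
  have ik1 : (i.+1 < k)%N by rewrite ltn_neqAle jk andbT; apply/eqP.
  by rewrite -gap ?ltnSn //; lra.
Qed.

Lemma prefix_le_transfer a b j k d :
  prefix_le a b -> (j < k)%N -> a j <= b j - d ->
  (forall i, (j < i < k)%N -> a i = b i) -> prefix_le a (transfer b j k d).
Proof.
move=> ab jk hj gap m mn; rewrite sum_transfer ?ltn_eqF //.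
have [km|mk] := ltnP k m; first by rewrite (ltn_trans jk km); have := ab m mn; lra.
case: ltnP => [jm|mj]; last by have := ab m mn; lra.
rewrite !(@big_cat_nat _ _ _ j.+1 0 m) //= !big_nat_recr //=.
have -> : \sum_(j.+1 <= i < m) a i = \sum_(j.+1 <= i < m) b i.
  by apply: eq_big_nat => i /andP[ji im]; apply: gap; rewrite ji (leq_trans im mk).
by have := ab j (leq_trans (ltnW jm) mn); lra.
Qed.

Lemma prefix_le_exists_lt a b : prefix_le a b ->
  [exists i : 'I_n, a i != b i] -> exists i, (i < n)%N && (a i < b i).
Proof.
move=> ab /existsP[[i0 i0n] /= ne].
have [/existsP[i lt]|/existsPn none] := boolP [exists i : 'I_n, a i < b i].
  by exists i; rewrite ltn_ord.
have ge i : (i < n)%N -> b i <= a i by move=> hi; rewrite leNgt (none (Ordinal hi)).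
case/eqP: ne; apply/le_anti; rewrite ge // andbT.
have := ab i0.+1 i0n; rewrite !big_nat_recr //=.
have : \sum_(0 <= l < i0) b l <= \sum_(0 <= l < i0) a l.
  by apply: ler_sum_nat => l /andP[_ li]; apply: ge (ltn_trans li i0n).
lra.
Qed.

Lemma ndiff_lt a b b' (i : 'I_n) :
  (forall p : 'I_n, a p != b' p -> a p != b p) -> a i != b i -> a i = b' i ->
  (ndiff a b' < ndiff a b)%N.
Proof.
move=> sub ne eq'; apply/proper_card/properP; split.
  by apply/subsetP => p; rewrite !inE; apply: sub.
by exists i; rewrite !inE ?ne // eq' eqxx.
Qed.

Lemma prefix_sum_concave f i m k : nonincr f -> (i <= m <= k)%N -> (k <= n)%N ->
  (k - m)%:R * \sum_(0 <= l < i) f l + (m - i)%:R * \sum_(0 <= l < k) f l <=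
  (k - i)%:R * \sum_(0 <= l < m) f l.
Proof.
move=> sf /andP[im mk] kn; have [->|ltmk] := eqVneq m k.
  by rewrite subnn mul0r add0r.
have mn : (m < n)%N by rewrite (leq_trans _ kn) // ltn_neqAle ltmk.
rewrite (@big_cat_nat _ _ _ m 0 k) // (@big_cat_nat _ _ _ i 0 m) //=.
set U := \sum_(i <= l < m) f l; set T := \sum_(m <= l < k) f l.
have hU : (m - i)%:R * f m <= U.
  rewrite mulr_natl -sumr_const_nat; apply: ler_sum_nat => l /andP[_ lm].
  exact: nonincr_le sf (ltnW lm) mn.
have hT : T <= (k - m)%:R * f m.
  rewrite mulr_natl -sumr_const_nat; apply: ler_sum_nat => l /andP[ml lk].
  exact: nonincr_le sf ml (leq_trans lk kn).
have -> : (k - i)%:R = (k - m)%:R + (m - i)%:R :> R by rewrite -natrD; congr _%:R; lia.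
have := ler_wpM2l (ler0n _ (k - m)) hU; have := ler_wpM2l (ler0n _ (m - i)) hT.
lra.
Qed.

Lemma exists_transfer_pair a b : prefix_le a b -> [exists i : 'I_n, a i != b i] ->
  exists j k, [/\ (j < k <= n)%N, a j < b j, (k < n)%N -> b k < a k
                & forall i, (j < i < k)%N -> a i = b i].
Proof.
move=> ab diff; have ub i : (i < n)%N && (a i < b i) -> (i <= n)%N by case/andP=> /ltnW.
case: (ex_maxnP (prefix_le_exists_lt ab diff) ub) => j /andP[jn ltj] jmax.
have exk : exists k, (j < k)%N && ((k < n)%N ==> (b k < a k)) by exists n; rewrite jn ltnn.
case: (ex_minnP exk) => k /andP[jk /implyP ltk] kmin.
have kn : (k <= n)%N by apply: kmin; rewrite jn ltnn.
exists j, k; split => // [|i /andP[ji ik]]; first by rewrite jk.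
have iN : (i < n)%N := leq_trans ik kn.
apply/le_anti; rewrite !leNgt; apply/andP; split; apply/negP => lt.
  by have := kmin i; rewrite ji iN lt => /(_ isT); rewrite leqNgt ik.
by have := jmax i; rewrite iN lt => /(_ isT); rewrite leqNgt ji.
Qed.

End PrefixDominance.

Lemma divr_unit_interval (R : realFieldType) (d c : R) :
  0 <= d <= c -> [/\ 0 <= d / c, d / c <= 1 & d / c * c = d].
Proof.
case/andP=> d0 dc; have [c0|cn0] := eqVneq c 0.
  have -> : d = 0 by apply/le_anti; rewrite d0 -c0 dc.
  by rewrite !mul0r lexx ler01.
have cp : 0 < c by rewrite lt_def cn0 (le_trans d0 dc).
by rewrite divr_ge0 ?ler_pdivrMr ?mul1r ?divfK // ltW.
Qed.

Section SymmetricNorm.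
Variables (R : realFieldType) (n : nat) (N : 'rV[R]_n -> R).
Hypotheses (normN : is_norm N) (signN : sign_invariant N) (permN : perm_invariant N).
Implicit Types (a b : nat -> R).

Lemma norm_conv_le v w (l : R) : 0 <= l <= 1 -> N w <= N v ->
  N (l *: v + (1 - l) *: w) <= N v.
Proof.
case: normN => _ normZ normD /andP[l0 l1] wv.
apply: le_trans (normD _ _) _; rewrite !normZ (ger0_norm l0) ger0_norm ?subr_ge0 //.
have : (1 - l) * N w <= (1 - l) * N v by rewrite ler_wpM2l ?subr_ge0.
lra.
Qed.

Lemma norm_transfer_le b j k d : (j < k)%N -> (k < n)%N -> 0 <= d <= b j - b k ->
  N (row_of n (transfer b j k d)) <= N (row_of n b).
Proof.
move=> jk kn /divr_unit_interval[t0 t1 tK]; set t := d / _ in t0 t1 tK.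
have jn := ltn_trans jk kn.
pose w : 'rV_n := \row_i row_of n b ord0 (tperm (Ordinal jn) (Ordinal kn) i).
have -> : row_of n (transfer b j k d) = (1 - t) *: row_of n b + (1 - (1 - t)) *: w.
  have neq (i : 'I_n) m (mn : (m < n)%N) : i <> Ordinal mn -> (i == m :> nat) = false.
    by move=> ne; apply/eqP => e; apply: ne; apply: val_inj.
  apply/rowP=> i; rewrite !mxE /transfer; case: tpermP => [->|->|ij ik] /=.
  - by rewrite eqxx; lra.
  - by rewrite (gtn_eqF jk) eqxx; lra.
  - by rewrite (neq _ _ _ ij) (neq _ _ _ ik); lra.
by apply: norm_conv_le; rewrite ?permN //; lra.
Qed.

Lemma norm_transfer_out_le b j d : (j < n)%N -> 0 <= d <= b j ->
  N (row_of n (transfer b j n d)) <= N (row_of n b).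
Proof.
move=> jn /divr_unit_interval[t0 t1 tK]; set t := d / _ in t0 t1 tK.
pose s (i : 'I_n) : R := if i == j :> nat then -1 else 1.
have sP i : s i = 1 \/ s i = -1 by rewrite /s; case: eqP; auto.
have -> : row_of n (transfer b j n d) =
    (1 - t / 2) *: row_of n b + (1 - (1 - t / 2)) *: \row_i (s i * row_of n b ord0 i).
  apply/rowP=> i; rewrite !mxE /transfer /s (ltn_eqF (ltn_ord i)).
  by case: eqP => [->|_]; lra.
by apply: norm_conv_le; rewrite ?signN //; lra.
Qed.

Lemma fan_step a b :
  nonincr n a -> nonneg n a -> nonincr n b -> prefix_le n a b ->
  [exists i : 'I_n, a i != b i] ->
  exists b', [/\ nonincr n b', prefix_le n a b',
                 (ndiff n a b' < ndiff n a b)%N & N (row_of n b') <= N (row_of n b)].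
Proof.
move=> sa pa sb ab diff.
have [j [k [/andP[jk kn] ltj ltk gap]]] := exists_transfer_pair ab diff.
have jn : (j < n)%N := leq_trans jk kn.
(* For k = n the transfer only lowers b j: the row ignores index n. *)
pose d := if (k < n)%N then Num.min (b j - a j) (a k - b k) else b j - a j.
have dj : d <= b j - a j by rewrite /d; case: ifP; rewrite ?ge_min ?lexx.
have dk : (k < n)%N -> d <= a k - b k by rewrite /d => ->; rewrite ge_min lexx orbT.
have d0 : 0 <= d.
  by rewrite /d; case: ifP => [/ltk lt|_]; rewrite ?le_min !subr_ge0 ?(ltW lt) ltW.
have fixed : b j - d = a j \/ (k < n)%N /\ b k + d = a k.
  rewrite /d; case: ifP => [kn'|_]; last by left; lra.
  by case: leP => _; [left | right]; [lra | split=> //; lra].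
exists (transfer b j k d); split.
- by apply: (nonincr_transfer sa) => //; [lra | move/dk; lra].
- by apply: prefix_le_transfer => //; lra.
- have sub (p : 'I_n) : a p != transfer b j k d p -> a p != b p.
    have [-> _|pj] := eqVneq (p : nat) j; first by rewrite lt_eqF.
    have [pk _|pk] := eqVneq (p : nat) k; last by rewrite /transfer (negPf pj) (negPf pk).
    by rewrite pk gt_eqF // ltk // -pk.
  case: fixed => [fj|[kn' fk]].
    by apply: (ndiff_lt (i := Ordinal jn)) => //=; rewrite ?lt_eqF // /transfer eqxx.
  apply: (ndiff_lt (i := Ordinal kn')) => //=; first by rewrite gt_eqF ?ltk.
  by rewrite /transfer gtn_eqF // eqxx.
- have [kn'|] := ltnP k n.
    apply: norm_transfer_le => //.
    by have := ltk kn'; have := nonincr_le sa (ltnW jk) kn'; lra.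
  move=> nk; have -> : k = n by apply/eqP; rewrite eqn_leq kn nk.
  by apply: norm_transfer_out_le => //; have := pa j jn; lra.
Qed.

Theorem fan_dominance a b :
  nonincr n a -> nonneg n a -> nonincr n b -> prefix_le n a b ->
  N (row_of n a) <= N (row_of n b).
Proof.
move=> sa pa; have [m] := ubnP (ndiff n a b); elim: m b => // m IH b lt_m sb ab.
have [diff|same] := boolP [exists i : 'I_n, a i != b i].
  have [b' [sb' ab' lt' le']] := fan_step sa pa sb ab diff.
  by apply: le_trans le'; apply: IH => //; apply: leq_trans lt' _.
have -> : row_of n a = row_of n b.
  by apply/rowP=> i; rewrite !mxE; apply/eqP; move/existsPn: same => /(_ i) /negPn.
by [].
Qed.

End SymmetricNorm.

Section SortedEntries.
Variables (R : realFieldType) (n : nat).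
Implicit Types (v : 'rV[R]_n) (f : nat -> R).

Lemma size_dsort v : size (dsort v) = n.
Proof. by rewrite size_sort size_map size_enum_ord. Qed.

Lemma vbig_nonincr v : nonincr n (vbig v).
Proof.
move=> i lt_in; have so : sorted (fun a b : R => b <= a) (dsort v).
  by apply: sort_sorted => a b; rewrite orbC le_total.
by apply: (sorted_leq_nth ge_trans (@lexx _ _) 0 so); rewrite ?inE ?size_dsort // ltnW.
Qed.

Lemma vbig_vabs_ge0 v i : 0 <= vbig (vabs v) i.
Proof.
rewrite /vbig; have [lt_i|le_i] := ltnP i (size (dsort (vabs v))); last by rewrite nth_default.
by have /(mem_nth 0) := lt_i; rewrite mem_sort => /mapP[j _ ->]; rewrite mxE.
Qed.

Lemma vbig_row_of f i : nonincr n f -> (i < n)%N -> vbig (row_of n f) i = f i.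
Proof.
move=> sf lt_in; rewrite /vbig /dsort.
have -> : [seq row_of n f ord0 j | j <- enum 'I_n] = map f (iota 0 n).
  by rewrite -val_enum_ord -map_comp; apply: eq_map => j; rewrite /= mxE.
rewrite sorted_sort ?(nth_map 0) ?nth_iota ?size_iota //; first exact: ge_trans.
rewrite sorted_map; apply: (@sub_in_sorted _ (fun j => (j < n)%N) leq).
- by move=> p q _ qn pq; apply: nonincr_le sf pq qn.
- by apply/allP => p; rewrite mem_iota.
- exact: iota_sorted.
Qed.

Lemma wmaj_row_ofP v f : nonincr n f -> wmaj (row_of n f) v <-> prefix_le n (vbig v) f.
Proof.
move=> sf; have sum_vbig m : (m <= n)%N ->
    \sum_(i < m) vbig (row_of n f) i = \sum_(0 <= i < m) f i.
  move=> mn; rewrite big_mkord; apply: eq_bigr => i _.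
  by rewrite vbig_row_of // (leq_trans _ mn).
split=> h m mn; last by case/andP: mn => _ mn; rewrite sum_vbig // -(big_mkord xpredT) h.
have [->|m0] := posnP m; first by rewrite !big_geq.
by rewrite -sum_vbig // big_mkord h // m0.
Qed.

Definition row_fun (u : 'rV[R]_n) i : R :=
  if (insub i : option 'I_n) is Some j then u ord0 j else 0.

Lemma row_funE u (i : 'I_n) : row_fun u i = u ord0 i.
Proof. by rewrite /row_fun valK. Qed.

Lemma row_funK u : row_of n (row_fun u) = u.
Proof. by apply/rowP => i; rewrite mxE row_funE. Qed.

End SortedEntries.

Section Optimum.
Variables (R : realFieldType) (n K : nat) (x : 'rV[R]_n).
Hypotheses (K_gt0 : (0 < K)%N) (K_lt_n : (K < n)%N).

Local Notation c := (vbig (vabs x)).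
Local Notation C m := (\sum_(0 <= i < m) c i).
Local Notation s := (sx K x).
Local Notation i_x := (ix K x).
Local Notation delta := (delta K x).

Lemma has_sx_argmin : has (fun i => all (fun j => s i <= s j) (iota 0 K)) (iota 0 K).
Proof.
pose i0 : 'I_K := Ordinal K_gt0.
case: (arg_minP (fun i : 'I_K => s i) (isT : predT i0)) => i _ imin.
apply/hasP; exists (val i); first by rewrite mem_iota /=.
by apply/allP => j; rewrite mem_iota => /andP[_ jK]; apply: (imin (Ordinal jK)).
Qed.

Lemma ix_lt : (i_x < K)%N.
Proof. by have := has_sx_argmin; rewrite has_find size_iota. Qed.

Lemma delta_le_sx j : (j < K)%N -> delta <= s j.
Proof.
move=> jK; have := nth_find 0%N has_sx_argmin; rewrite -/(ix K x) nth_iota ?ix_lt //.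
by move/allP => /(_ j); rewrite mem_iota; apply.
Qed.

Lemma delta_lt_sx i : (i < i_x)%N -> delta < s i.
Proof.
move=> lt_i; have := before_find 0%N lt_i; rewrite nth_iota ?(ltn_trans lt_i ix_lt) //.
move/negbT/allPn => [j]; rewrite mem_iota /= => jK; rewrite -ltNge.
exact/le_lt_trans/delta_le_sx.
Qed.

Lemma sx_mul i : (i < K)%N -> (K - i)%:R * s i = C n - C i.
Proof.
move=> iK; rewrite /sx mulrC divfK; last by rewrite pnatr_eq0 subn_eq0 -ltnNge.
rewrite (@big_cat_nat _ _ _ i 0 n) //= ?(leq_trans (ltnW iK) (ltnW K_lt_n)) //; lra.
Qed.

Lemma delta_ge0 : 0 <= delta.
Proof. by apply: divr_ge0 => //; apply: sumr_ge0 => i _; apply: vbig_vabs_ge0. Qed.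

Lemma delta_eq : (K - i_x)%:R * delta = C n - C i_x.
Proof. exact: sx_mul ix_lt. Qed.

Lemma delta_lt_vbig i : (i < i_x)%N -> delta < c i.
Proof.
(* i_x is the first minimizer, so s (i_x - 1) > delta; both are averages of
   the same tail, s (i_x - 1) with the extra term c (i_x - 1). *)
move=> lt_i; have [p ix_eq] : exists p, i_x = p.+1.
  by exists i_x.-1; rewrite prednK // (leq_ltn_trans _ lt_i).
have pK : (p < K)%N by have := ix_lt; rewrite ix_eq => /ltnW.
have c_le : c p <= c i.
  by apply: nonincr_le (vbig_nonincr _) _ (ltn_trans pK K_lt_n); rewrite -ltnS -ix_eq.
have lt_s : delta < s p by apply: delta_lt_sx; rewrite ix_eq.
have := sx_mul pK; have := delta_eq; rewrite ix_eq big_nat_recr //=.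
have -> : (K - p)%:R = (K - p.+1)%:R + 1 :> R by rewrite natr1; congr _%:R; lia.
have : (K - p.+1)%:R * delta <= (K - p.+1)%:R * s p by rewrite ler_wpM2l // ltW.
lra.
Qed.

Definition ux_fun i := if (i < i_x)%N then c i else if (i < K)%N then delta else 0.

Lemma ux_row_of : ux K x = row_of n ux_fun.
Proof. by apply/rowP => i; rewrite !mxE. Qed.

Lemma ux_fun_ge0 i : 0 <= ux_fun i.
Proof.
rewrite /ux_fun; case: ifP => _; first exact: vbig_vabs_ge0.
by case: ifP => _; rewrite ?delta_ge0.
Qed.

Lemma ux_fun_eq0 i : (K <= i)%N -> ux_fun i = 0.
Proof. by move=> Ki; rewrite /ux_fun !ltnNge Ki (leq_trans (ltnW ix_lt) Ki). Qed.

Lemma ux_fun_le i j : (i <= j)%N -> ux_fun j <= ux_fun i.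
Proof.
move=> ij; have [Kj|jK] := leqP K j; first by rewrite ux_fun_eq0 ?ux_fun_ge0.
rewrite /ux_fun (leq_ltn_trans ij jK) jK; case: (ltnP j i_x) => [jx|xj].
  rewrite (leq_ltn_trans ij jx).
  exact: nonincr_le (vbig_nonincr _) ij (ltn_trans jK K_lt_n).
by case: ifP => [/delta_lt_vbig/ltW|].
Qed.

Lemma sum_ux_fun_head m : (m <= i_x)%N -> \sum_(0 <= i < m) ux_fun i = C m.
Proof.
by move=> mx; apply: eq_big_nat => i /andP[_ im]; rewrite /ux_fun (leq_trans im mx).
Qed.

Lemma sum_ux_fun_mid m : (i_x <= m <= K)%N ->
  \sum_(0 <= i < m) ux_fun i = C i_x + (m - i_x)%:R * delta.
Proof.
case/andP=> xm mK; rewrite (@big_cat_nat _ _ _ i_x) //= sum_ux_fun_head //.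
congr (_ + _); rewrite mulr_natl -sumr_const_nat; apply: eq_big_nat => i /andP[xi im].
by rewrite /ux_fun ltnNge xi (leq_trans im mK).
Qed.

Lemma sum_ux_fun_tail m : (K <= m)%N -> \sum_(0 <= i < m) ux_fun i = C n.
Proof.
move=> Km; rewrite (@big_cat_nat _ _ _ K) //= sum_ux_fun_mid ?leqnn ?(ltnW ix_lt) //.
have -> : \sum_(K <= i < m) ux_fun i = 0.
  by rewrite big_nat_cond big1 // => i /andP[/andP[Ki _] _]; apply: ux_fun_eq0.
by have := delta_eq; lra.
Qed.

Lemma prefix_le_vbig_ux : prefix_le n c ux_fun.
Proof.
move=> m mn; have [mx|xm] := leqP m i_x; first by rewrite sum_ux_fun_head.
have [Km|mK] := leqP K m.
  rewrite sum_ux_fun_tail // (@big_cat_nat _ _ _ m 0 n) //= lerDl.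
  by apply: sumr_ge0 => i _; apply: vbig_vabs_ge0.
rewrite sum_ux_fun_mid ?(ltnW xm) ?(ltnW mK) //.
have := sx_mul mK; have := delta_eq.
have -> : (K - i_x)%:R = (K - m)%:R + (m - i_x)%:R :> R by rewrite -natrD; congr _%:R; lia.
have : (K - m)%:R * delta <= (K - m)%:R * s m by rewrite ler_wpM2l ?delta_le_sx.
lra.
Qed.

Lemma ux_feasible : feasible K x (ux K x).
Proof.
rewrite ux_row_of; split.
- by move=> i j ij _; rewrite !mxE; apply: ux_fun_le.
- by move=> i _; rewrite mxE ux_fun_ge0.
- by move=> i Ki; rewrite mxE ux_fun_eq0.
- by apply/wmaj_row_ofP; [move=> i _; apply: ux_fun_le | apply: prefix_le_vbig_ux].
Qed.

Lemma ux_prefix_le f : nonincr n f -> (forall i, (K <= i)%N -> f i = 0) ->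
  prefix_le n c f -> prefix_le n ux_fun f.
Proof.
move=> sf f0 cf m mn; have ixK := ix_lt.
have sum_tail p : (K <= p <= n)%N -> \sum_(0 <= i < p) f i = \sum_(0 <= i < n) f i.
  case/andP=> Kp pn; rewrite [in RHS](@big_cat_nat _ _ _ p) //=.
  suff -> : \sum_(p <= i < n) f i = 0 by rewrite addr0.
  by rewrite big_nat_cond big1 // => i /andP[/andP[pi _] _]; apply: f0 (leq_trans Kp pi).
have [mx|xm] := leqP m i_x; first by rewrite sum_ux_fun_head // cf.
have [Km|mK] := leqP K m; first by rewrite sum_ux_fun_tail // sum_tail ?Km // cf.
rewrite sum_ux_fun_mid ?(ltnW xm) ?(ltnW mK) //.
have xmK : (i_x <= m <= K)%N by rewrite (ltnW xm) (ltnW mK).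
have := prefix_sum_concave sf xmK (ltnW K_lt_n).
rewrite (sum_tail K) ?leqnn ?(ltnW K_lt_n) //.
have := cf _ (ltnW (ltn_trans ixK K_lt_n)); have := cf _ (leqnn n); have := delta_eq.
set p := (m - i_x)%:R; set q := (K - m)%:R.
have -> : (K - i_x)%:R = q + p :> R by rewrite -natrD; congr _%:R; lia.
have p0 : 0 < p by rewrite ltr0n subn_gt0.
have q0 : 0 < q by rewrite ltr0n subn_gt0.
move=> e hn hx hc; rewrite -(ler_pM2l (addr_gt0 q0 p0)).
have -> : (q + p) * (C i_x + p * delta) = q * C i_x + p * C n.
  by rewrite mulrDr mulrCA e; ring.
by apply: le_trans hc; apply: lerD; rewrite ler_wpM2l // ltW.
Qed.

Lemma feasible_row_fun u : feasible K x u ->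
  [/\ nonincr n (row_fun u), (forall i, (K <= i)%N -> row_fun u i = 0)
     & prefix_le n c (row_fun u)].
Proof.
case=> le_u u_ge0 u0 maj_u; set f := row_fun u.
have fE i (iN : (i < n)%N) : f i = u ord0 (Ordinal iN) := row_funE u (Ordinal iN).
have f0 i : (K <= i)%N -> f i = 0.
  move=> Ki; have [iN|ni] := ltnP i n; first by rewrite fE u0.
  by rewrite /f /row_fun insubF // ltnNge ni.
have sf : nonincr n f.
  move=> i i1N; have [Ki|iK] := leqP K i.+1.
    rewrite f0 //; have [Ki'|iK] := leqP K i; first by rewrite f0.
    by rewrite (fE _ (ltnW i1N)) u_ge0.
  by rewrite (fE _ i1N) (fE _ (ltnW i1N)); apply: le_u.
by split=> //; apply/wmaj_row_ofP; rewrite ?row_funK.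
Qed.

End Optimum.

Theorem mainTheorem8 (R : realFieldType) (n K : nat)
  (N : 'rV[R]_n -> R) (x : 'rV[R]_n) :
  (1 < K)%N -> (K < n)%N ->
  is_norm N -> sign_invariant N -> perm_invariant N ->
  feasible K x (ux K x) /\
  (forall u : 'rV[R]_n, feasible K x u -> N (ux K x) <= N u).
Proof.
move=> /ltnW K_gt0 K_lt_n normN signN permN; split; first exact: ux_feasible.
move=> u /feasible_row_fun [sf f0 cf].
rewrite -(row_funK u) ux_row_of.
apply: fan_dominance => //; last exact: ux_prefix_le.
- by move=> i _; apply: ux_fun_le.
- by move=> i _; apply: ux_fun_ge0.
Qed.
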